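(* Let $\mathcal{F}=\{U_1,\dots,U_n\}$ be a family of subsets of a topological space $\mathbf{R}$, let $K$ be a simplicial complex, and let $\gamma\colon C_*(K)\to C_*(\mathbf{R})$ be a nontrivial chain map constrained by $\mathcal{F}$. If $\bigcap_{i=1}^n U_i=\emptyset$, then $\gamma$ is a homological almost-embedding of $K$ in $\mathbf{R}$.
   Context: Coefficients are $\mathbb{Z}_2$; $C_*(K)$ is the simplicial chain complex of $K$ and $C_*(\mathbf{R})$ the singular chain complex of $\mathbf{R}$. For a proper subset $I\subsetneq[n]$ write $U(I)=\bigcap_{i\in[n]\setminus I}U_i$, and put $U([n])=\mathbf{R}$. A chain map $\gamma$ is constrained by $(\mathcal{F},\Phi)$ if $\Phi\colon K\to 2^{[n]}$ satisfies $\Phi(\emptyset)=\emptyset$ and $\Phi(\sigma\cap\tau)=\Phi(\sigma)\cap\Phi(\tau)$ for all $\sigma,\tau\in K$, and for every simplex $\sigma\in K$ the support of $\gamma(\sigma)$ (union of images of singular simplices with nonzero coefficient) is contained in $U(\Phi(\sigma))$; $\gamma$ is constrained by $\mathcal{F}$ if such a $\Phi$ exists. A chain map is nontrivial if each vertex is sent to a $0$-chain consisting of an odd number of points. A homological almost-embedding is a nontrivial chain map sending disjoint simplices of $K$ to chains with disjoint supports. *)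

From HB Require Import structures.
From mathcomp Require Import all_boot all_order all_algebra.
From mathcomp Require Import all_classical all_reals.
From mathcomp Require Import topology normedtype.
From mathcomp Require Import Rstruct Rstruct_topology.

Set Implicit Arguments.
Unset Strict Implicit.
Unset Printing Implicit Defensive.
Import Order.TTheory GRing.Theory Num.Theory.
Import numFieldNormedType.Exports.
Local Open Scope classical_set_scope.
Local Open Scope ring_scope.

Notation Real := Rdefinitions.R.

Definition Delta (k : nat) : set 'rV[Real]_(k.+1) :=
  [set x | (forall i, 0 <= x ord0 i) /\ \sum_i x ord0 i = 1].
Arguments Delta k : clear implicits.

(* a singular k-simplex is (represented by) a map continuous on Delta k;
   two representatives are identified when they agree on Delta k *)
Definition sing_agree (X : Type) (k : nat) (f g : 'rV[Real]_(k.+1) -> X) : Prop :=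
  forall x, Delta k x -> f x = g x.

(* a singular k-chain (Z_2 coefficients): a finite list of singular
   simplices; the coefficient of a simplex is the parity of its multiplicity *)
Definition sing_chain (X : Type) (k : nat) := seq ('rV[Real]_(k.+1) -> X).

Definition is_sing_chain (X : topologicalType) (k : nat) (c : sing_chain X k) : Prop :=
  forall f, List.In f c -> {within Delta k, continuous f}.

Definition coeff (X : Type) (k : nat) (c : sing_chain X k)
  (f : 'rV[Real]_(k.+1) -> X) : bool :=
  odd (count (fun g => `[< sing_agree g f >]) c).

Definition chain_eq (X : Type) (k : nat) (c d : sing_chain X k) : Prop :=
  forall f, coeff c f = coeff d f.

(* i-th face inclusion Delta k -> Delta (k+1): insert 0 at coordinate i *)
Definition face (k : nat) (i : 'I_(k.+2)) (x : 'rV[Real]_(k.+1)) : 'rV[Real]_(k.+2) :=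
  \row_j (match unlift i j with Some j' => x ord0 j' | None => 0 end).

Definition sbound (X : Type) (k : nat) (c : sing_chain X k.+1) : sing_chain X k :=
  flatten [seq [seq f \o face i | i <- enum 'I_(k.+2)] | f <- c].

Definition support (X : Type) (k : nat) (c : sing_chain X k) : set X :=
  [set x | exists f, coeff c f /\ exists p, Delta k p /\ f p = x].

(* a (finite, abstract) simplicial complex on vertex set V; it contains the
   empty simplex as soon as it is nonempty *)
Definition simplicial_complex (V : finType) (K : {set {set V}}) : Prop :=
  forall s t : {set V}, s \in K -> t \subset s -> t \in K.

(* gamma k s is the image of the k-simplex s (when #|s| = k+1) *)
Definition chain_map (V : finType) (X : topologicalType) (K : {set {set V}})
  (gamma : forall k : nat, {set V} -> sing_chain X k) : Prop :=
  (forall k (s : {set V}), s \in K -> #|s| = k.+1 -> is_sing_chain (gamma k s)) /\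
  (forall k (s : {set V}), s \in K -> #|s| = k.+2 ->
     chain_eq (flatten [seq gamma k (s :\ v) | v <- enum s])
              (sbound (gamma k.+1 s))).

Definition odd_points (X : Type) (c : sing_chain X 0) : Prop :=
  exists s : sing_chain X 0,
    pairwise (fun f g => ~~ `[< sing_agree f g >]) s /\ chain_eq c s /\ odd (size s).

Definition nontrivial (V : finType) (X : topologicalType) (K : {set {set V}})
  (gamma : forall k : nat, {set V} -> sing_chain X k) : Prop :=
  forall v : V, (@finset.set1 V v) \in K -> odd_points (gamma 0%N ((@finset.set1 V v))).

(* U(I) = intersection of the U_i, i in [n] \ I  (equal to the whole space for I = [n]) *)
Definition Uof (X : Type) (n : nat) (U : 'I_n -> set X) (I : {set 'I_n}) : set X :=
  [set x | forall i : 'I_n, i \notin I -> U i x].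

Definition constrained_by (V : finType) (X : topologicalType) (K : {set {set V}})
  (gamma : forall k : nat, {set V} -> sing_chain X k)
  (n : nat) (U : 'I_n -> set X) (Phi : {set V} -> {set 'I_n}) : Prop :=
  Phi finset.set0 = finset.set0 /\
  (forall s t, s \in K -> t \in K -> Phi (s :&: t) = Phi s :&: Phi t) /\
  (forall k (s : {set V}), s \in K -> #|s| = k.+1 -> support (gamma k s) `<=` Uof U (Phi s)).

Definition constrained (V : finType) (X : topologicalType) (K : {set {set V}})
  (gamma : forall k : nat, {set V} -> sing_chain X k)
  (n : nat) (U : 'I_n -> set X) : Prop :=
  exists Phi : {set V} -> {set 'I_n}, constrained_by K gamma U Phi.

Definition homological_almost_embedding (V : finType) (X : topologicalType)
  (K : {set {set V}}) (gamma : forall k : nat, {set V} -> sing_chain X k) : Prop :=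
  chain_map K gamma /\ nontrivial K gamma /\
  (forall k l (s t : {set V}), s \in K -> t \in K -> #|s| = k.+1 -> #|t| = l.+1 ->
     fintype.disjoint (mem s) (mem t) -> support (gamma k s) `&` support (gamma l t) = set0).

From Pilot Require Import Defs.
From HB Require Import structures.
From mathcomp Require Import all_boot all_order all_algebra.
From mathcomp Require Import all_classical all_reals.
From mathcomp Require Import topology normedtype.
Local Open Scope classical_set_scope.

Set Implicit Arguments.
Unset Strict Implicit.
Unset Printing Implicit Defensive.

(* For disjoint simplices s, t we get Phi s :&: Phi t = Phi (s :&: t) = Phi set0
   = set0, so a common point of the supports of gamma s and gamma t lies in
   U(set0), the intersection of all the U_i, which is empty. *)

Lemma UofI (X : Type) (n : nat) (U : 'I_n -> set X) (A B : {set 'I_n}) :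
  Uof U A `&` Uof U B `<=` Uof U (A :&: B).
Proof. by move=> x [xA xB] i; rewrite inE negb_and => /orP[/xA|/xB]. Qed.

Lemma Uof0 (X : Type) (n : nat) (U : 'I_n -> set X) :
  Uof U finset.set0 = [set x | forall i : 'I_n, U i x].
Proof. by apply/seteqP; split=> x xU i //; apply: xU; rewrite inE. Qed.

Lemma constrained_by_disjoint_support (V : finType) (X : topologicalType)
    (K : {set {set V}}) (gamma : forall k : nat, {set V} -> sing_chain X k)
    (n : nat) (U : 'I_n -> set X) (Phi : {set V} -> {set 'I_n})
    k l (s t : {set V}) :
  constrained_by K gamma U Phi -> s \in K -> t \in K ->
  #|s| = k.+1 -> #|t| = l.+1 -> fintype.disjoint (mem s) (mem t) ->
  Defs.support (gamma k s) `&` Defs.support (gamma l t) `<=` [set x | forall i, U i x].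
Proof.
move=> [Phi0 [PhiI Phi_supp]] sK tK card_s card_t dst x [xs xt].
have st0 : s :&: t = finset.set0 by apply/eqP; rewrite setI_eq0.
have PhiIst : Phi s :&: Phi t = finset.set0 by rewrite -PhiI // st0 Phi0.
rewrite -Uof0 -PhiIst.
exact: UofI (conj (Phi_supp k s sK card_s x xs) (Phi_supp l t tK card_t x xt)).
Qed.

Theorem lemma26 (V : finType) (X : topologicalType) (K : {set {set V}})
  (n : nat) (U : 'I_n -> set X)
  (gamma : forall k : nat, {set V} -> sing_chain X k) :
  simplicial_complex K ->
  chain_map K gamma ->
  nontrivial K gamma ->
  constrained K gamma U ->
  [set x | forall i : 'I_n, U i x] = set0 ->
  homological_almost_embedding K gamma.
Proof.
move=> _ chain_gamma nontriv_gamma [Phi constr] capU0.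
split=> //; split=> // k l s t sK tK card_s card_t dst.
rewrite -subset0 -capU0.
exact: constrained_by_disjoint_support constr sK tK card_s card_t dst.
Qed.
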